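(* Let $3\le t\le w<n$ and suppose a Steiner system $S(t,w,n)$ exists. Then $$q'_0(t,w,n)\le \frac{\binom{n-1}{t-1}}{\binom{w-1}{t-1}}-\frac{\binom{n-t+2}{2}}{\binom{w-t+2}{2}}+\min_{S}\ \max_{D\in S'}\ \chi(D)+1,$$ where the minimum is over all Steiner systems $S$ of type $S(t,w,n)$ and $S'$ is the set of all $S(2,w-t+2,n-t+2)$ systems derived from $S$ (by removing a $(t-2)$-subset of points).
   Context: $\mathbb{Z}_q=\{0,\dots,q-1\}$ (an alphabet); $\mathrm{wt}$ = number of nonzero coordinates; $d$ = Hamming distance; $J_q(n,w)$ = weight-$w$ words of $\mathbb{Z}_q^n$. An $(n,w,d)_q$ code of size $M$ is a subset $C\subseteq J_q(n,w)$ with $|C|=M$ and pairwise distances at least $d$. A Steiner system $S(t,k,n)$ is a pair $(N,B)$, $|N|=n$, $B$ a set of $k$-subsets (blocks) of $N$ with every $t$-subset of $N$ in exactly one block. For $\alpha\subset N$ with $0<|\alpha|<t$, the derived system is $(N\setminus\alpha,\{\beta\setminus\alpha:\alpha\subseteq\beta\in B\})$, an $S(t-|\alpha|,k-|\alpha|,n-|\alpha|)$. For an $S(2,k,n)$ system $D$, $\chi(D)$ is the minimum number of classes in a partition of its blocks such that distinct blocks in the same class are disjoint. For $t,k,n$ such that an $S(t,k,n)$ exists, $q'_0(t,k,n)$ is the smallest $q$ for which an $(n,k,2k-t+1)_q$ code of size $\binom{n}{t}/\binom{k}{t}$ exists. *)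

From mathcomp Require Import all_boot all_order all_algebra.
Set Implicit Arguments. Unset Strict Implicit. Unset Printing Implicit Defensive.

Definition word (n q : nat) := {ffun 'I_n -> 'I_q}.

Definition wt n q (x : word n q) : nat := #|[set i | val (x i) != 0%N]|.

Definition hdist n q (x y : word n q) : nat := #|[set i | x i != y i]|.

Definition is_code (n w d q M : nat) (C : {set word n q}) : Prop :=
  [/\ #|C| = M,
      (forall x, x \in C -> wt x = w) &
      (forall x y, x \in C -> y \in C -> x != y -> d <= hdist x y)].

Arguments is_code : clear implicits.
Definition code_exists (n w d q M : nat) : Prop :=
  exists C : {set word n q}, is_code n w d q M C.

Arguments code_exists : clear implicits.

Definition steiner (t k n : nat) (B : {set {set 'I_n}}) : Prop :=
  (forall b, b \in B -> #|b| = k) /\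
  (forall T : {set 'I_n}, #|T| = t -> #|[set b in B | T \subset b]| = 1%N).

Arguments steiner : clear implicits.

(* Blocks of the system derived from B at alpha (on the point set 'I_n \ alpha). *)
Definition derived n (B : {set {set 'I_n}}) (alpha : {set 'I_n}) : {set {set 'I_n}} :=
  [set b :\: alpha | b in [set b in B | alpha \subset b]].

(* The blocks of D can be partitioned into at most k classes such that
   distinct blocks in the same class are disjoint: each block b of D gets a
   class c b = Some i with i < k (non-blocks are ignored). *)
Definition parallel_colorable n (D : {set {set 'I_n}}) (k : nat) : bool :=
  [exists c : {ffun {set 'I_n} -> option 'I_k},
    [forall b in D, c b != None] &&
    [forall b1 in D, forall b2 in D,
       ((b1 != b2) && (c b1 == c b2)) ==> [disjoint b1 & b2]]].

Lemma parallel_colorable_card n (D : {set {set 'I_n}}) :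
  exists k, parallel_colorable D k.
Proof.
exists #|D|; apply/existsP.
exists [ffun b => insub (index b (enum D))]; apply/andP; split.
  apply/forallP => b; apply/implyP => bD; rewrite ffunE insubT //.
  by rewrite cardE index_mem mem_enum.
apply/forallP => b1; apply/implyP => b1D; apply/forallP => b2; apply/implyP => b2D.
apply/implyP => /andP [neq /eqP eqi]; exfalso; move/negP: neq; apply.
have h1 : b1 \in enum D by rewrite mem_enum.
have h2 : b2 \in enum D by rewrite mem_enum.
move: eqi; rewrite !ffunE.
case: insubP => [u1 _ v1|]; last by move=> /negP[]; rewrite cardE index_mem h1.
case: insubP => [u2 _ v2|]; last by move=> /negP[]; rewrite cardE index_mem h2.
move=> [] /(congr1 val); rewrite v1 v2 => eqi.
by rewrite -(nth_index b1 h1) eqi (nth_index b1 h2).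
Qed.

Definition chi n (D : {set {set 'I_n}}) : nat :=
  ex_minn (parallel_colorable_card D).

From mathcomp Require Import all_boot all_order all_algebra.
From mathcomp Require Import zify.

Set Implicit Arguments.
Unset Strict Implicit.
Unset Printing Implicit Defensive.

(* Every block b becomes the word
   of support b.  To choose its symbols, attach to each point i a
   (t-2)-subset win i containing i, taken injectively in i (a cyclic window
   of 'I_n).  At a point i of b:
   - if win i is contained in b, the symbol is 1 + the colour of b \ win i
     in an optimal parallel colouring of the derived S(2, w-t+2, n-t+2)
     system at win i (at most K colours, K the max of the chi's);
   - otherwise b is one of the r - bD "private" blocks through i and not
     through win i, and the symbol is K + 1 + the rank of b among them.
   Two distinct blocks meet in at most t-1 points, and they can agree at a
   common point i only if their meet is exactly win i; by injectivity of the
   windows they then agree at most once, on a meet of size t-2.  Hence they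
   differ in at least 2w - (t-1) positions. *)

Lemma meet_of_disjoint_residues (T : finType) (A b1 b2 : {set T}) :
  A \subset b1 -> A \subset b2 -> [disjoint b1 :\: A & b2 :\: A] ->
  b1 :&: b2 = A.
Proof.
move=> Ab1 Ab2 /disjoint_setI0/setP dj; apply/setP => x; have := dj x.
rewrite !inE; case: (boolP (x \in A)) => [xA | _] /=; last by [].
by move=> _; rewrite (subsetP Ab1) ?(subsetP Ab2).
Qed.

Lemma residue_inj (T : finType) (A b1 b2 : {set T}) :
  A \subset b1 -> A \subset b2 -> b1 :\: A = b2 :\: A -> b1 = b2.
Proof.
have split_off (b : {set T}) : A \subset b -> b = A :|: (b :\: A).
  by move=> Ab; rewrite -{1}(setID b A) (setIidPr Ab).
by move=> Ab1 Ab2 E; rewrite (split_off b1 Ab1) (split_off b2 Ab2) E.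
Qed.

Section Counting.
Variable T : finType.
Implicit Types A U X : {set T}.

Definition between A U (k : nat) : {set {set T}} :=
  [set X : {set T} | (A \subset X) && (X \subset U) && (#|X| == k)].

(* There are C(|U| - |A|, k - |A|) of them: X <-> X \ A, a subset of U \ A. *)
Lemma card_between A U k : A \subset U -> #|A| <= k ->
  #|between A U k| = 'C(#|U| - #|A|, k - #|A|).
Proof.
move=> AU Ak.
have -> : between A U k =
    (fun X => X :|: A) @: [set X : {set T} | X \subset U :\: A & #|X| == k - #|A|].
  apply/setP => X; rewrite !inE; apply/idP/imsetP.
  - move=> /andP [/andP [AX XU] /eqP cX]; exists (X :\: A).
      by rewrite inE setSD //= cardsD (setIidPr AX) cX.
    by rewrite setUC -{1}(setID X A) (setIidPr AX).
  - move=> [Y]; rewrite inE => /andP [YUA /eqP cY] ->.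
    have YA0 : Y :&: A = set0.
      apply/setP => x; rewrite !inE; apply/andP => -[xY xA].
      by move: (subsetP YUA x xY); rewrite inE xA.
    rewrite subsetUr subUset AU (subset_trans YUA (subsetDl _ _)) /=.
    by rewrite cardsU YA0 cards0 subn0 cY subnK.
rewrite card_in_imset ?cards_draws ?cardsD ?(setIidPr AU) //.
move=> X Y; rewrite !inE => /andP [XUA _] /andP [YUA _] XY.
have strip (Z : {set T}) : Z \subset U :\: A -> (Z :|: A) :\: A = Z.
  move=> ZUA; apply/setP => x; rewrite !inE andb_orr andNb orbF.
  by apply: andb_idl => /(subsetP ZUA); rewrite inE => /andP [].
by rewrite -(strip X XUA) XY strip.
Qed.
End Counting.

(* Double counting the pairs (T, b) with A <= T <= b, |T| = t, b a block:
   the number of blocks through a set A of at most t points, times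
   C(w - |A|, t - |A|), is C(n - |A|, t - |A|). *)
Lemma count_blocks_through t w n (S : {set {set 'I_n}}) (A : {set 'I_n}) :
  steiner t w n S -> #|A| <= t -> t <= w ->
  #|[set b in S | A \subset b]| * 'C(w - #|A|, t - #|A|) = 'C(n - #|A|, t - #|A|).
Proof.
move=> [Sw St] At tw.
have -> : 'C(n - #|A|, t - #|A|) =
    \sum_(X in between A setT t) #|[set b in S | X \subset b]|.
  rewrite (eq_bigr (fun _ => 1)); last first.
    by move=> X; rewrite inE => /andP [_ /eqP]; apply: St.
  by rewrite sum1_card card_between ?subsetT // cardsT card_ord.
under eq_bigr => X _ do rewrite -sum1dep_card.
rewrite (exchange_big_dep (fun b => b \in S)) /=; last by move=> X b _ /andP [].
rewrite (eq_bigr (fun b : {set 'I_n} => if A \subset b then 'C(w - #|A|, t - #|A|) else 0)).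
  by rewrite -big_mkcondr -sum1dep_card big_distrl; apply: eq_bigr => b _; apply: mul1n.
move=> b bS; rewrite bS sum1dep_card.
have -> : [set X in between A setT t | X \subset b] = between A b t.
  by apply/setP => X; rewrite !inE subsetT andbT -!andbA; congr (_ && _); rewrite andbC.
case: ifP => Ab; first by rewrite card_between // Sw.
apply/eqP; rewrite cards_eq0; apply/eqP/setP => X; rewrite !inE.
by apply/negbTE; apply: contraFN Ab => /andP [/andP [AX Xb] _]; apply: subset_trans AX Xb.
Qed.

Lemma card_blocks_through t w n (S : {set {set 'I_n}}) (A : {set 'I_n}) :
  steiner t w n S -> #|A| <= t -> t <= w ->
  #|[set b in S | A \subset b]| = 'C(n - #|A|, t - #|A|) %/ 'C(w - #|A|, t - #|A|).
Proof.
move=> HS At tw; rewrite -(count_blocks_through HS At tw) mulnK // bin_gt0; lia.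
Qed.

Lemma card_steiner t w n (S : {set {set 'I_n}}) :
  steiner t w n S -> t <= w -> #|S| = 'C(n, t) %/ 'C(w, t).
Proof.
move=> HS tw; have := card_blocks_through HS (A := set0).
rewrite cards0 !subn0 => /(_ (leq0n t) tw) <-.
by apply: eq_card => b; rewrite !inE sub0set andbT.
Qed.

Lemma card_blocks_through_point t w n (S : {set {set 'I_n}}) (i : 'I_n) :
  steiner t w n S -> 0 < t -> t <= w ->
  #|[set b in S | i \in b]| = 'C(n.-1, t.-1) %/ 'C(w.-1, t.-1).
Proof.
move=> HS t0 tw; have := card_blocks_through HS (A := [set i]).
rewrite cards1 !subn1 => /(_ t0 tw) <-.
by apply: eq_card => b; rewrite !inE sub1set.
Qed.

Lemma card_blocks_through_codim2 t w n (S : {set {set 'I_n}}) (A : {set 'I_n}) :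
  steiner t w n S -> 2 <= t -> t <= w -> w <= n -> #|A| = t - 2 ->
  #|[set b in S | A \subset b]| = 'C(n - t + 2, 2) %/ 'C(w - t + 2, 2).
Proof.
move=> HS t2 tw wn cA; have := card_blocks_through HS (A := A).
rewrite cA => /(_ (leq_subr _ _) tw) ->.
by congr ('C(_, _) %/ 'C(_, _)); lia.
Qed.

(* Two distinct blocks meet in fewer than t points: otherwise a t-subset of
   their meet would lie in two blocks. *)
Lemma steiner_meet_lt t w n (S : {set {set 'I_n}}) (b1 b2 : {set 'I_n}) :
  steiner t w n S -> b1 \in S -> b2 \in S -> b1 != b2 -> #|b1 :&: b2| < t.
Proof.
move=> [_ St] b1S b2S b12; rewrite ltnNge; apply/negP => t_le.
have /card_gt0P [X] : 0 < #|[set X : {set 'I_n} | X \subset b1 :&: b2 & #|X| == t]|.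
  by rewrite cards_draws bin_gt0.
rewrite inE => /andP [Xb12 /eqP cX].
have : [set b1; b2] \subset [set b in S | X \subset b].
  apply/subsetP => b; rewrite !inE => /orP [] /eqP ->.
    by rewrite b1S (subset_trans Xb12 (subsetIl _ _)).
  by rewrite b2S (subset_trans Xb12 (subsetIr _ _)).
by move/subset_leq_card; rewrite cards2 b12 St.
Qed.

Section Windows.
Variable n : nat.

Definition offset (j x : 'I_n) : nat := if j <= x then x - j else x + n - j.

Lemma offset_lt (j x : 'I_n) : offset j x < n.
Proof. by have := ltn_ord j; have := ltn_ord x; rewrite /offset; case: ifP; lia. Qed.

Lemma offset_inj (j : 'I_n) : injective (fun x => Ordinal (offset_lt j x)).
Proof.
move=> x y /(congr1 val) /=; rewrite /offset.
have := ltn_ord j; have := ltn_ord x; have := ltn_ord y => hy hx hj.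
by case: ifP => h1; case: ifP => h2 => E; apply/val_inj => /=; lia.
Qed.

Definition window (L : nat) (j : 'I_n) : {set 'I_n} := [set x | offset j x < L].

Lemma mem_window L j : 0 < L -> j \in window L j.
Proof. by move=> L0; rewrite inE /offset leqnn subnn. Qed.

Lemma card_window L j : L <= n -> #|window L j| = L.
Proof.
move=> Ln.
have -> : window L j =
    (fun x => Ordinal (offset_lt j x)) @^-1: [set widen_ord Ln k | k in 'I_L].
  apply/setP => x; rewrite !inE; apply/idP/imsetP => [xL | [k _ /(congr1 val) /= ->] //].
  by exists (Ordinal xL); last exact: val_inj.
rewrite card_preimset; last exact: offset_inj.
by rewrite card_imset ?card_ord // => k k' /(congr1 val) /= /val_inj.
Qed.

(* A proper window determines its origin: the origin is its only point whose
   cyclic predecessor lies outside the window. *)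
Lemma window_inj L : 0 < L < n -> injective (window L).
Proof.
move=> /andP [L0 Ln] i j ij.
have pred_lt : (if i == 0 :> nat then n - 1 else i - 1) < n.
  by have := ltn_ord i; case: ifP; lia.
have : Ordinal pred_lt \notin window L i.
  rewrite inE /offset /=; have := ltn_ord i.
  by case: (boolP (i == 0 :> nat)); case: ifP; lia.
have : i \in window L i by apply: mem_window.
rewrite ij !inE /offset /= => ij1 ij2; apply/val_inj; move: ij1 ij2.
have := ltn_ord i; have := ltn_ord j.
by case: (boolP (i == 0 :> nat)) => /=; case: ifP; case: ifP; lia.
Qed.
End Windows.

Section OptimalColouring.
Variables (n : nat) (D : {set {set 'I_n}}).

Definition proper_colouring k (c : {ffun {set 'I_n} -> option 'I_k}) : bool :=
  [forall b in D, c b != None] &&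
  [forall b1 in D, forall b2 in D,
     ((b1 != b2) && (c b1 == c b2)) ==> [disjoint b1 & b2]].

Definition optimal_colouring : {ffun {set 'I_n} -> option 'I_(chi D)} :=
  odflt [ffun=> None] [pick c | proper_colouring c].

Lemma optimal_colouring_proper : proper_colouring optimal_colouring.
Proof.
have : parallel_colorable D (chi D) by rewrite /chi; case: ex_minnP.
rewrite /optimal_colouring; case: pickP => [c // | none].
by rewrite /parallel_colorable => /existsP [c]; move: (none c); rewrite /= /proper_colouring => ->.
Qed.

Definition colour (b : {set 'I_n}) : nat := oapp val 0 (optimal_colouring b).

Lemma colour_lt b : b \in D -> colour b < chi D.
Proof.
move=> bD; have /andP [/forallP /(_ b)] := optimal_colouring_proper.
by rewrite bD /colour; case: (optimal_colouring b) => //= c _ _; apply: ltn_ord.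
Qed.

Lemma colour_disjoint b1 b2 : b1 \in D -> b2 \in D -> b1 != b2 ->
  colour b1 = colour b2 -> [disjoint b1 & b2].
Proof.
move=> b1D b2D b12; have /andP [/forallP some_colour /forallP disj] :=
  optimal_colouring_proper.
move: (some_colour b1) (some_colour b2); rewrite b1D b2D /colour /=.
case E1: (optimal_colouring b1) => [c1|] // _; case E2: (optimal_colouring b2) => [c2|] // _.
move=> /val_inj c12; move: (disj b1); rewrite b1D => /forallP /(_ b2).
by rewrite b2D b12 E1 E2 c12 eqxx.
Qed.
End OptimalColouring.

Lemma mem_derived n (S : {set {set 'I_n}}) (A b : {set 'I_n}) :
  b \in S -> A \subset b -> b :\: A \in derived S A.
Proof. by move=> bS Ab; apply/imsetP; exists b; rewrite // inE bS Ab. Qed.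

Section SteinerCode.
Variables (t w n : nat) (S : {set {set 'I_n}}).
Hypothesis steinerS : steiner t w n S.
Hypothesis t_le_w : t <= w.

Variable win : 'I_n -> {set 'I_n}.
Hypothesis win_inj : injective win.
Hypothesis mem_win : forall i, i \in win i.
Hypothesis card_win : forall i, #|win i| <= t - 2.

Variable K : nat.
Hypothesis chi_le : forall i, chi (derived S (win i)) <= K.

Definition private_blocks (i : 'I_n) : {set {set 'I_n}} :=
  [set b in S | (i \in b) && ~~ (win i \subset b)].

Lemma card_private i : #|private_blocks i| =
  #|[set b in S | i \in b]| - #|[set b in S | win i \subset b]|.
Proof.
have -> : private_blocks i = [set b in S | i \in b] :\: [set b in S | win i \subset b].
  by apply/setP => b; rewrite !inE; case: (b \in S) (i \in b) (win i \subset b) => [] [] [].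
rewrite cardsD (setIidPr _) //; apply/subsetP => b; rewrite !inE.
by case/andP => -> /subsetP; apply.
Qed.

Variable P : nat.
Hypothesis private_le : forall i, #|private_blocks i| <= P.

(* The symbol of block b at point i (0 outside b): a colour in 1..K, or a
   private rank in K+1..K+P. *)
Definition symbol (b : {set 'I_n}) (i : 'I_n) : nat :=
  if i \in b then
    if win i \subset b then (colour (derived S (win i)) (b :\: win i)).+1
    else K + 1 + index b (enum (private_blocks i))
  else 0.

Lemma symbol_le b i : b \in S -> symbol b i <= P + K.
Proof.
move=> bS; rewrite /symbol; case: ifP => // ib; case: ifP => wb.
  by have := colour_lt (mem_derived bS wb); have := chi_le i; lia.
have : index b (enum (private_blocks i)) < #|private_blocks i|.
  by rewrite cardE index_mem mem_enum inE bS ib wb.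
by have := private_le i; move: #|private_blocks i| (index _ _) => m k; lia.
Qed.

Lemma symbol_eq0 b i : (symbol b i == 0) = (i \notin b).
Proof. by rewrite /symbol; case: ifP => //; case: ifP => // _; rewrite addn1. Qed.

Definition codeword (b : {set 'I_n}) : word n (P + K).+1 :=
  [ffun i => inord (symbol b i)].

Lemma codewordE b i : b \in S -> val (codeword b i) = symbol b i.
Proof. by move=> bS; rewrite ffunE; apply: inordK; rewrite ltnS symbol_le. Qed.

Lemma support_codeword b : b \in S -> [set i | val (codeword b i) != 0] = b.
Proof. by move=> bS; apply/setP => i; rewrite inE codewordE // symbol_eq0 negbK. Qed.

(* Two distinct blocks with the same symbol at a common point i meet exactly
   in win i: equal private ranks are impossible, a colour never equals a
   private rank, and equal colours force disjoint residues. *)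
Lemma agreement_meet b1 b2 i : b1 \in S -> b2 \in S -> b1 != b2 ->
  i \in b1 -> i \in b2 -> symbol b1 i = symbol b2 i -> b1 :&: b2 = win i.
Proof.
move=> b1S b2S b12 ib1 ib2; rewrite /symbol ib1 ib2.
have colour_le b : b \in S -> win i \subset b ->
    colour (derived S (win i)) (b :\: win i) < K.
  by move=> bS wb; have := colour_lt (mem_derived bS wb); have := chi_le i; lia.
case: ifP => wb1; case: ifP => wb2.
- move=> /eq_add_S same_colour; apply: (meet_of_disjoint_residues wb1 wb2).
  apply: (colour_disjoint (mem_derived b1S wb1) (mem_derived b2S wb2) _ same_colour).
  by apply: contra b12 => /eqP /(residue_inj wb1 wb2) ->.
- by have := colour_le b1 b1S wb1; lia.
- by have := colour_le b2 b2S wb2; lia.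
move=> /addnI same_rank; case/negP: b12; apply/eqP.
by apply: (index_inj b1 _ _ same_rank); rewrite mem_enum inE ?b1S ?b2S ?ib1 ?ib2 ?wb1 ?wb2.
Qed.

Definition agreements (b1 b2 : {set 'I_n}) : {set 'I_n} :=
  [set i in b1 :&: b2 | symbol b1 i == symbol b2 i].

(* Meet and agreements together count at most t-1: without agreement the
   meet has at most t-1 points; an agreement at i makes the meet equal to
   win i, of size at most t-2, and makes i the only agreement. *)
Lemma meet_agreements_le b1 b2 : b1 \in S -> b2 \in S -> b1 != b2 ->
  #|b1 :&: b2| + #|agreements b1 b2| <= t - 1.
Proof.
move=> b1S b2S b12.
have meet_lt := steiner_meet_lt steinerS b1S b2S b12.
have agree_meet j : j \in agreements b1 b2 -> b1 :&: b2 = win j.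
  by rewrite !inE => /andP [/andP [jb1 jb2] /eqP]; apply: agreement_meet.
have [-> | [i iA]] := set_0Vmem (agreements b1 b2); first by rewrite cards0; lia.
have : agreements b1 b2 \subset [set i].
  apply/subsetP => j jA; rewrite inE; apply/eqP/win_inj.
  by rewrite -(agree_meet j jA) (agree_meet i iA).
move/subset_leq_card; rewrite cards1 (agree_meet i iA).
have := card_win i; have /card_gt0P : exists x, x \in win i by exists i.
by lia.
Qed.

Lemma codeword_dist b1 b2 : b1 \in S -> b2 \in S -> b1 != b2 ->
  2 * w - t + 1 <= hdist (codeword b1) (codeword b2).
Proof.
move=> b1S b2S b12; have [Sw _] := steinerS.
have differ : [set i | codeword b1 i != codeword b2 i] =
    (b1 :|: b2) :\: agreements b1 b2.
  apply/setP => i; rewrite !inE -val_eqE /= !codewordE //.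
  move: (symbol_eq0 b1 i) (symbol_eq0 b2 i).
  by case: (i \in b1); case: (i \in b2) => /=; move: (symbol b1 i) (symbol b2 i); lia.
have agree_sub : agreements b1 b2 \subset b1 :|: b2.
  by apply/subsetP => i; rewrite !inE => /andP [/andP [-> _] _].
have meet_le : #|b1 :&: b2| <= w by rewrite -(Sw b1 b1S) subset_leq_card ?subsetIl.
have := meet_agreements_le b1S b2S b12; have := steiner_meet_lt steinerS b1S b2S b12.
rewrite /hdist differ cardsD (setIidPr agree_sub) cardsU (Sw b1 b1S) (Sw b2 b2S).
move: #|b1 :&: b2| #|agreements b1 b2| meet_le => m a; lia.
Qed.

Lemma steiner_code : code_exists n w (2 * w - t + 1) (P + K).+1 #|S|.
Proof.
have [Sw _] := steinerS.
exists (codeword @: S); split.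
- rewrite card_in_imset // => b1 b2 b1S b2S E.
  by rewrite -(support_codeword b1S) -(support_codeword b2S) E.
- by move=> x /imsetP [b bS ->]; rewrite /wt support_codeword // Sw.
move=> x y /imsetP [b1 b1S ->] /imsetP [b2 b2S ->] xy.
by apply: codeword_dist => //; apply: contraNneq xy => ->.
Qed.
End SteinerCode.

Local Open Scope ring_scope.

(* The theorem: windows of length t-2 on the cycle 'I_n, K the largest
   chromatic index of a derived system, and P = r - bD private blocks, where
   r blocks pass through a point and bD through a (t-2)-set. *)
Theorem mainTheorem12 (t w n : nat) :
  (3 <= t)%N -> (t <= w)%N -> (w < n)%N ->
  (exists B : {set {set 'I_n}}, steiner t w n B) ->
  forall S : {set {set 'I_n}}, steiner t w n S ->
  exists q : nat,
    code_exists n w (2 * w - t + 1) q ('C(n, t) %/ 'C(w, t)) /\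
    (q%:Z <= ('C(n.-1, t.-1) %/ 'C(w.-1, t.-1))%:Z
             - ('C(n - t + 2, 2) %/ 'C(w - t + 2, 2))%:Z
             + (\max_(alpha : {set 'I_n} | #|alpha| == (t - 2)%N)
                   chi (derived S alpha))%:Z
             + 1).
Proof.
move=> t3 tw wn _ S HS.
set r := ('C(n.-1, t.-1) %/ 'C(w.-1, t.-1))%N.
set bD := ('C(n - t + 2, 2) %/ 'C(w - t + 2, 2))%N.
set K := (\max_(alpha : {set 'I_n} | _) _)%N.
pose win := @window n (t - 2).
have win_inj : injective win by apply: window_inj; apply/andP; split; lia.
have mem_win i : i \in win i by apply: mem_window; lia.
have card_win i : #|win i| = (t - 2)%N by apply: card_window; lia.
have chi_le i : (chi (derived S (win i)) <= K)%N.
  by apply: (leq_bigmax_cond (win i)); rewrite card_win.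
have through_point i : #|[set b in S | i \in b]| = r.
  by apply: card_blocks_through_point HS _ tw; lia.
have through_win i : #|[set b in S | win i \subset b]| = bD.
  by apply: card_blocks_through_codim2 HS _ tw (ltnW wn) (card_win i); lia.
have private_card i : #|private_blocks S win i| = (r - bD)%N.
  by rewrite (card_private _ mem_win) (through_point i) (through_win i).
have bD_le_r : (bD <= r)%N.
  have i0 : 'I_n by exists 0%N; lia.
  rewrite -(through_point i0) -(through_win i0); apply: subset_leq_card.
  by apply/subsetP => b; rewrite !inE => /andP [-> /subsetP]; apply.
exists (r - bD + K).+1; split.
  rewrite -(card_steiner HS tw); apply: (steiner_code HS tw win_inj mem_win) => i.
  - by rewrite card_win.
  - exact: chi_le.
  - by rewrite private_card.
by lia.
Qed.
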